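(* Suppose that $A=\{a_1<a_2<\cdots<a_n\}$ is a set of integers with $a_1=1$ such that $A\oplus A\supseteq[k,k+m-1]$ for some integers $k$ and $m$. If $a_n\le m$, then $\mathcal M(n)\ge m-n$.
   Context: For a set $A$ of integers, $A\oplus A=\{a+b: a,b\in A,\ a\ne b\}$; $[x,y]$ denotes the set of integers $i$ with $x\le i\le y$, and $[m]=\{1,\dots,m\}$. An edge-magic labelling of a graph $G$ with $n$ vertices and $m'$ edges is a bijection $l:V(G)\cup E(G)\to[m'+n]$ such that $l(a)+l(b)+l(ab)$ is the same for all edges $ab$; $G$ is edge-magic if it admits one. $\mathcal M(n)$ denotes the maximum number of edges of an edge-magic graph with $n$ vertices. *)

From Stdlib Require Import ClassicalEpsilon.
From mathcomp Require Import all_boot all_order all_algebra.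
Set Implicit Arguments. Unset Strict Implicit. Unset Printing Implicit Defensive.
Import Order.TTheory GRing.Theory Num.Theory.

Definition simple_edges (n : nat) (E : {set {set 'I_n}}) : bool :=
  [forall e in E, #|e| == 2].

(* An edge-magic labelling of the graph (I_n, E) given by a vertex labelling
   lv and an edge labelling le (only its values on E matter): the combined map
   V ∪ E -> nat is a bijection onto [1, |E| + n], and l(a)+l(b)+l(ab) is
   constant over the edges ab. *)
Definition edge_magic_labelling (n : nat) (E : {set {set 'I_n}})
    (lv : 'I_n -> nat) (le : {set 'I_n} -> nat) : Prop :=
  let N := #|E| + n in
  [/\ (forall v, 1 <= lv v <= N)%N /\ (forall e, e \in E -> 1 <= le e <= N)%N,
      injective lv /\ {in E &, injective le},
      (forall v e, e \in E -> lv v <> le e),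
      (forall j, 1 <= j <= N -> (exists v, lv v = j) \/ (exists2 e, e \in E & le e = j))%N
    & exists s : nat, forall e, e \in E -> (\sum_(x in e) lv x + le e)%N = s].

Definition edge_magic (n : nat) (E : {set {set 'I_n}}) : Prop :=
  simple_edges E /\ exists lv le, edge_magic_labelling E lv le.

Definition edge_magicb (n : nat) (E : {set {set 'I_n}}) : bool :=
  if excluded_middle_informative (edge_magic E) then true else false.

Definition Mmax (n : nat) : nat :=
  \max_(E : {set {set 'I_n}} | edge_magicb E) #|E|.

Definition in_restricted_sumset (A : seq int) (x : int) : Prop :=
  exists a b, [/\ a \in A, b \in A, a != b & x = a + b]%R.

From mathcomp Require Import all_boot all_order all_algebra zify.
Import Order.TTheory GRing.Theory Num.Theory.

Set Implicit Arguments.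
Unset Strict Implicit.
Unset Printing Implicit Defensive.

(* Label the n vertices by the elements of A. Every label l in [1, M] missing
   from A becomes the label of an edge uv with a_u + a_v = K + M - l, which
   exists because K + M - l lies in [K, K + M - 1] and hence in A (+) A. Every
   edge then has weight K + M, and vertices and edges together use the labels
   [1, M] exactly once, so the graph is edge-magic with M - n edges. *)

Lemma edge_magic_card_le_Mmax (n : nat) (E : {set {set 'I_n}}) :
  edge_magic E -> (#|E| <= Mmax n)%N.
Proof.
move=> magicE; apply: (leq_bigmax_cond (P := fun E => edge_magicb E)).
by rewrite /edge_magicb; case: ClassicalEpsilon.excluded_middle_informative.
Qed.

Section MagicFromSumset.

Variables (n : nat) (A : seq nat) (K M : nat).
Hypothesis uniqA : uniq A.
Hypothesis sizeA : size A = n.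
Hypothesis A_range : forall a, a \in A -> 0 < a <= M.
Hypothesis sumset_interval : forall x, K <= x < K + M ->
  exists a b, [/\ a \in A, b \in A, a != b & x = a + b].

Let vlabel (v : 'I_n) : nat := nth 0 A v.

Let vsum (e : {set 'I_n}) : nat := \sum_(v in e) vlabel v.

(* On edges [elabel] is a positive label, so the truncated subtraction never
   truncates there. *)
Let elabel (e : {set 'I_n}) : nat := K + M - vsum e.

Let missing : seq nat := [seq l <- iota 1 M | l \notin A].

Let edge_for (l : nat) : {set 'I_n} :=
  odflt set0 [pick e : {set 'I_n} | (#|e| == 2) && (elabel e == l)].

Let E : {set {set 'I_n}} := [set e in map edge_for missing].

Lemma vlabel_in v : vlabel v \in A.
Proof. by apply: mem_nth; rewrite sizeA. Qed.

Lemma vlabel_inj : injective vlabel.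
Proof. by move=> u v /eqP; rewrite nth_uniq ?sizeA // => /eqP /val_inj. Qed.

Lemma vlabel_onto a : a \in A -> exists v, vlabel v = a.
Proof.
move=> aA; have ia : index a A < n by rewrite -sizeA index_mem.
by exists (Ordinal ia); rewrite /vlabel nth_index.
Qed.

Lemma mem_missing l : (l \in missing) = (l \notin A) && (0 < l <= M).
Proof. by rewrite mem_filter mem_iota; congr (_ && _); lia. Qed.

Lemma missing_range l : l \in missing -> 0 < l <= M.
Proof. by rewrite mem_missing => /andP []. Qed.

Lemma count_A_iota : count (mem A) (iota 1 M) = n.
Proof.
rewrite -size_filter -sizeA; apply/perm_size/uniq_perm => //.
  by rewrite filter_uniq ?iota_uniq.
move=> x; rewrite mem_filter mem_iota andbC; apply: andb_idl => /A_range; lia.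
Qed.

Lemma n_le_M : n <= M.
Proof. by rewrite -count_A_iota -[leqRHS](size_iota 1) count_size. Qed.

Lemma size_missing : size missing = M - n.
Proof.
rewrite size_filter -[in RHS](size_iota 1 M) -(count_predC (mem A)).
by rewrite count_A_iota addKn.
Qed.

Lemma edge_for_spec l :
  l \in missing -> #|edge_for l| = 2 /\ elabel (edge_for l) = l.
Proof.
rewrite mem_missing => /andP [_ l_range].
rewrite /edge_for; case: pickP => [e /andP [/eqP card_e /eqP] //|no_edge].
have [a [b [aA bA neq_ab sum_ab]]] := @sumset_interval (K + M - l) ltac:(lia).
have [[u label_u] [v label_v]] := (vlabel_onto aA, vlabel_onto bA).
have neq_uv : u != v.
  by apply: contraNneq neq_ab => eq_uv; rewrite -label_u -label_v eq_uv.
have := no_edge [set u; v].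
rewrite cards2 neq_uv /elabel /vsum big_setU1 ?inE //= big_set1.
by rewrite label_u label_v -sum_ab; lia.
Qed.

Lemma card_edge_for l : l \in missing -> #|edge_for l| = 2.
Proof. by case/edge_for_spec. Qed.

Lemma elabel_edge_for l : l \in missing -> elabel (edge_for l) = l.
Proof. by case/edge_for_spec. Qed.

Lemma edge_for_inj : {in missing &, injective edge_for}.
Proof.
move=> l1 l2 /elabel_edge_for label1 /elabel_edge_for label2 eq_e.
by rewrite -label1 -label2 eq_e.
Qed.

Lemma edge_of_E e : e \in E -> exists2 l, l \in missing & e = edge_for l.
Proof. by rewrite inE => /mapP. Qed.

Lemma card_E : #|E| = M - n.
Proof.
rewrite cardsE (card_uniqP _) ?size_map ?size_missing //.
by rewrite map_inj_in_uniq ?filter_uniq ?iota_uniq //; apply: edge_for_inj.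
Qed.

Lemma edge_magic_labelling_E : edge_magic_labelling E vlabel elabel.
Proof.
rewrite /edge_magic_labelling card_E subnK ?n_le_M //; split.
- split=> [v | _ /edge_of_E [l l_miss ->]]; first exact: A_range (vlabel_in v).
  by rewrite elabel_edge_for // missing_range.
- split=> [|_ _ /edge_of_E [l1 l1_miss ->] /edge_of_E [l2 l2_miss ->]].
    exact: vlabel_inj.
  by rewrite !elabel_edge_for // => ->.
- move=> v _ /edge_of_E [l l_miss ->]; rewrite elabel_edge_for // => eq_l.
  by move: l_miss (vlabel_in v); rewrite mem_missing eq_l => /andP [/negbTE ->].
- move=> j j_range.
  case: (boolP (j \in A)) => [/vlabel_onto | j_notA]; first by left.
  have j_miss : j \in missing by rewrite mem_missing j_notA.
  by right; exists (edge_for j); rewrite ?elabel_edge_for // inE map_f.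
- exists (K + M) => _ /edge_of_E [l l_miss ->].
  have := elabel_edge_for l_miss; have := missing_range l_miss.
  rewrite /elabel /vsum; lia.
Qed.

Lemma edge_magic_E : edge_magic E.
Proof.
split; last by exists vlabel, elabel; apply: edge_magic_labelling_E.
by apply/forall_inP => _ /edge_of_E [l l_miss ->]; rewrite card_edge_for.
Qed.

Lemma Mmax_ge_missing_labels : M - n <= Mmax n.
Proof. by rewrite -card_E; apply/edge_magic_card_le_Mmax/edge_magic_E. Qed.

End MagicFromSumset.

Lemma path_lt_mem_bounds d (T : porderType d) (x : T) (s : seq T) :
  path <%O x s -> forall y, y \in x :: s -> (x <= y <= last x s)%O.
Proof.
elim: s x => [|z s IHs] x /=.
  by move=> _ y; rewrite inE => /eqP ->; rewrite lexx.
case/andP=> lt_xz path_zs y; rewrite inE => /orP [/eqP ->|y_in].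
  rewrite lexx (le_trans (ltW lt_xz)) //.
  by case/andP: (IHs z path_zs z (mem_head _ _)).
by case/andP: (IHs z path_zs y y_in) => le_zy ->; rewrite (le_trans (ltW lt_xz)).
Qed.

Local Open Scope ring_scope.

Theorem lemma1 (n : nat) (s : seq int) (k m : int) :
  sorted <%R s -> size s = n -> head 0 s = 1 ->
  (forall x : int, k <= x <= k + m - 1 -> in_restricted_sumset s x) ->
  last 0 s <= m ->
  (Mmax n)%:Z >= m - n%:Z.
Proof.
move=> sorted_s size_s head_s sumset_s last_s.
have [|n_lt_m] := leP (m - n%:Z) 0; first by move/le_trans; apply.
case: s sorted_s size_s head_s sumset_s last_s => [|a s] //=.
move=> path_s size_s a_eq1 sumset_s last_s; subst a.
have s_range x : x \in 1 :: s -> 1 <= x <= m.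
  by case/(path_lt_mem_bounds path_s)/andP => -> /le_trans ->.
have [a [b [aA bA _ k_ab]]] : in_restricted_sumset (1 :: s) k.
  by apply: sumset_s; lia.
have k_ge2 : 2 <= k by have := s_range _ aA; have := s_range _ bA; lia.
have absz_inj : {in 1 :: s &, injective absz}.
  by move=> x y /s_range x_range /s_range y_range; lia.
suff : (`|m| - n <= Mmax n)%N by lia.
apply: (Mmax_ge_missing_labels (A := map absz (1 :: s)) (K := `|k|%N)).
- by rewrite map_inj_in_uniq // lt_sorted_uniq.
- by rewrite size_map.
- by move=> _ /mapP [x /s_range x_range ->]; lia.
move=> x x_range.
have [a' [b' [a'A b'A neq_ab' x_ab]]] : in_restricted_sumset (1 :: s) x%:Z.
  by apply: sumset_s; lia.
exists `|a'|%N, `|b'|%N; split; rewrite ?map_f //.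
  by apply: contra_neq neq_ab'; apply: absz_inj.
by have := s_range _ a'A; have := s_range _ b'A; lia.
Qed.
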